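(* Let $n\ge 2$ and let $\rho$ be an $n$-qubit state. Then $L(\rho)=1$ if and only if there exists $j\in[n]$ such that $\mathrm{rank}\,\rho_{\{i\}}=1$ for all $i\in[n]\setminus\{j\}$ (i.e. at most one single-qubit marginal of $\rho$ is not pure).
   Context: Let $[n]=\{1,\dots,n\}$, $\mathcal H_{[n]}=(\mathbb C^2)^{\otimes n}$; for $S\subseteq[n]$, $\rho_S$ is the partial trace over qubits outside $S$. $\mathcal C(\rho,\mathcal S)=\{\sigma\text{ density matrix on }\mathcal H_{[n]}:\sigma_S=\rho_S\ \forall S\in\mathcal S\}$; a collection $\mathcal S$ of subsets of $[n]$ determines $\rho$ if $\mathcal C(\rho,\mathcal S)=\{\rho\}$. $L(\rho)=\min_{\mathcal S\text{ determines }\rho}\max_{S\in\mathcal S}|S|$. *)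

From HB Require Import structures.
From mathcomp Require Import all_boot all_order all_algebra.
From mathcomp Require Import complex.
From mathcomp Require Import boolp reals.
Set Implicit Arguments. Unset Strict Implicit. Unset Printing Implicit Defensive.
Import Order.TTheory GRing.Theory Num.Theory.
Local Open Scope ring_scope.

(* Computational basis of (C^2)^{\otimes n}: bit strings indexed by the qubits [n] = 'I_n. *)
Definition bits (n : nat) := {ffun 'I_n -> bool}.

(* Dimension of H_[n] (= 2^n), with basis enumerated by enum_val / enum_rank. *)
Definition qdim (n : nat) : nat := #|{: bits n}|.

Section QState.
Variables (R : realType) (n : nat).
Notation C := (complex R).
Notation Mat := 'M[C]_(qdim n).

Definition entry (A : Mat) (x y : bits n) : C := A (enum_rank x) (enum_rank y).

Definition adj {p q} (A : 'M[C]_(p, q)) : 'M[C]_(q, p) := (map_mx Num.conj A)^T.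

Definition is_density (A : Mat) : Prop :=
  [/\ adj A = A,
      (forall v : 'cV[C]_(qdim n), 0 <= (adj v *m A *m v) 0 0)
    & \tr A = 1].

Definition merge (S : {set 'I_n}) (x z : bits n) : bits n :=
  [ffun i => if i \in S then x i else z i].

(* Partial trace over the qubits outside S: rho_S.  Its matrix entry
   <x_S| rho_S |y_S> is  ptrace S A x y, which only depends on the restrictions
   of x and y to S (the sum runs over the basis states z of the traced-out
   qubits, normalised to be 0 on S). *)
Definition ptrace (S : {set 'I_n}) (A : Mat) (x y : bits n) : C :=
  \sum_(z : bits n | [forall i, (i \in S) ==> ~~ z i])
     entry A (merge S x z) (merge S y z).

Definition same_marginal (S : {set 'I_n}) (A B : Mat) : Prop :=
  forall x y : bits n, ptrace S A x y = ptrace S B x y.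

(* C(rho, SS) = {rho} *)
Definition determines (rho : Mat) (SS : {set {set 'I_n}}) : Prop :=
  forall sigma : Mat, is_density sigma ->
    (forall S, S \in SS -> same_marginal S sigma rho) -> sigma = rho.

(* L(rho) = min over determining SS of max_{S in SS} |S|.  The full family
   [set setT] always determines rho, so the minimum (with default n) is exact. *)
Definition Lval (rho : Mat) : nat :=
  \big[minn/n]_(SS : {set {set 'I_n}} | `[< determines rho SS >])
     \max_(S in SS) #|S|.

Definition bit1 (i : 'I_n) (a : 'I_2) : bits n :=
  [ffun k => (k == i) && (a != ord0)].

Definition marginal1 (i : 'I_n) (rho : Mat) : 'M[C]_2 :=
  \matrix_(a < 2, b < 2) ptrace [set i] rho (bit1 i a) (bit1 i b).

End QState.

(* If qubit [i] has a pure marginal, with kernel vector [w], then the positive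
   matrix [rho] is annihilated by [w] on qubit [i]; consequently every partial
   trace [rho_T] with [i \in T] is the tensor product of [rho_(T :\ i)] with the
   pure state orthogonal to [w].  Stripping off all qubits but [j] one at a time,
   the single-qubit marginals determine [rho], so [L rho <= 1]; and [L rho >= 1]
   since two distinct basis states have the same (trivial) empty marginal.

   Conversely, suppose qubits [i <> k] both have mixed marginals.  Split every
   marginal [rho_m] as [K_m(0) + K_m(1)] with rank-one positive [K_m(c)] (an
   LDL^* factorisation).  The product state [(x)_m rho_m] and the state obtained
   by adding [(x)_m sum_c h_m(c) K_m(c)], where [h_m = 1] except on [i] and [k],
   are two distinct states with the same single-qubit marginals, so [L rho >= 2]. *)

From Pilot Require Import Defs.
From HB Require Import structures.
From mathcomp Require Import all_boot all_order all_algebra.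
From mathcomp Require Import complex.
From mathcomp Require Import boolp reals.
From mathcomp Require Import ring.
Import Order.TTheory GRing.Theory Num.Theory.
Local Open Scope ring_scope.
Set Implicit Arguments. Unset Strict Implicit. Unset Printing Implicit Defensive.

Section ConjC.
Variable C : numClosedFieldType.

Lemma conjCN (a : C) : (- a)^* = - a^*.
Proof. exact: rmorphN. Qed.

Lemma conjCD (a b : C) : (a + b)^* = a^* + b^*.
Proof. exact: rmorphD. Qed.

Lemma conjCM (a b : C) : (a * b)^* = a^* * b^*.
Proof. exact: rmorphM. Qed.

Lemma conjC_div (a b : C) : (a / b)^* = a^* / b^*.
Proof. exact: fmorph_div. Qed.

Lemma conjC_sum (I : finType) (P : pred I) (F : I -> C) :
  (\sum_(i | P i) F i)^* = \sum_(i | P i) (F i)^*.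
Proof. exact: rmorph_sum. Qed.

Lemma conjC_prod (I : finType) (F : I -> C) : (\prod_i F i)^* = \prod_i (F i)^*.
Proof. exact: rmorph_prod. Qed.

End ConjC.

Section Adjoint.
Variable R : realType.
Local Notation C := (complex R).

Lemma adjE p q (A : 'M[C]_(p, q)) i j : adj A i j = (A j i)^*.
Proof. by rewrite /adj !mxE. Qed.

Lemma adjD p q (A B : 'M[C]_(p, q)) : adj (A + B) = adj A + adj B.
Proof. by apply/matrixP => i j; rewrite !(adjE, mxE) rmorphD. Qed.

Lemma adjN p q (A : 'M[C]_(p, q)) : adj (- A) = - adj A.
Proof. by apply/matrixP => i j; rewrite !(adjE, mxE) rmorphN. Qed.

Lemma adjZ p q a (A : 'M[C]_(p, q)) : adj (a *: A) = a^* *: adj A.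
Proof. by apply/matrixP => i j; rewrite !(adjE, mxE) rmorphM. Qed.

Lemma adjM p q r (A : 'M[C]_(p, q)) (B : 'M[C]_(q, r)) :
  adj (A *m B) = adj B *m adj A.
Proof.
apply/matrixP => i j; rewrite !(adjE, mxE) rmorph_sum; apply: eq_bigr => k _.
by rewrite !adjE rmorphM mulrC.
Qed.

Lemma quadE m (A : 'M[C]_m) (v : 'cV[C]_m) :
  (adj v *m A *m v) 0 0 = \sum_p \sum_q (v p 0)^* * A p q * v q 0.
Proof.
rewrite mxE; under eq_bigr => k _ do rewrite mxE big_distrl /=.
rewrite exchange_big; apply: eq_bigr => p _; apply: eq_bigr => q _.
by rewrite adjE.
Qed.

Lemma cnorm_eq0 m (u : 'cV[C]_m) : (adj u *m u) 0 0 = 0 -> u = 0.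
Proof.
rewrite mxE => u0; apply/matrixP => p k; rewrite (ord1 k) [RHS]mxE.
have ge0 i : predT i -> 0 <= (adj u 0 i * u i 0) by rewrite adjE mulrC mul_conjC_ge0.
have /eqP := psumr_eq0P ge0 u0 (i := p) isT.
by rewrite adjE mulrC mul_conjC_eq0 => /eqP.
Qed.

(* With [s = |A v|^2] and [c = (A v)^* A (A v)], the form at [v - t A v],
   [t = s / (c + 1)], equals [- s^2 (c + 2) / (c + 1)^2]; positivity forces [s = 0]. *)
Lemma psd_quad_eq0 m (A : 'M[C]_m) (v : 'cV[C]_m) : adj A = A ->
  (forall u : 'cV[C]_m, 0 <= (adj u *m A *m u) 0 0) ->
  (adj v *m A *m v) 0 0 = 0 -> A *m v = 0.
Proof.
move=> hA psd q0; set u := A *m v; apply: cnorm_eq0.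
set s := (adj u *m u) 0 0; set c := (adj u *m A *m u) 0 0.
have s0 : 0 <= s by rewrite /s mxE sumr_ge0 // => p _; rewrite adjE mulrC mul_conjC_ge0.
have c0 : 0 <= c by apply: psd.
have quad_line t : t^* = t ->
    (adj (v - t *: u) *m A *m (v - t *: u)) 0 0 = - (t * 2) * s + t ^+ 2 * c.
  move=> ht; have au : adj u = adj v *m A by rewrite /u adjM hA.
  have e1 : adj v *m A *m u = adj u *m u by rewrite au -mulmxA.
  have e2 : adj u *m A *m v = adj u *m u by rewrite -mulmxA.
  rewrite adjD adjN adjZ ht !mulmxDl !mulmxDr !mulmxN !mulNmx -!scalemxAl -!scalemxAr.
  rewrite e1 e2 /s /c; move: (adj v *m A *m v) (adj u *m u) (adj u *m A *m u) q0.
  by move=> X Y Z X0; rewrite !mxE X0; ring.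
have c1 : 0 < c + 1 by rewrite ltr_wpDl.
set t := s / (c + 1).
have t_real : t^* = t by apply/CrealP; apply: ger0_real; rewrite divr_ge0 // ltW.
have := psd (v - t *: u); rewrite quad_line //.
have -> : - (t * 2) * s + t ^+ 2 * c = - (s ^+ 2 * (c + 2)) / (c + 1) ^+ 2.
  by rewrite /t; field; rewrite gt_eqF.
rewrite pmulr_lge0 ?invr_gt0 ?exprn_gt0 // oppr_ge0 => s_le0.
have : s ^+ 2 * (c + 2) == 0 by rewrite eq_le s_le0 mulr_ge0 ?exprn_ge0 ?addr_ge0.
by rewrite mulf_eq0 expf_eq0 /= (gt_eqF (ltr_wpDl c0 _)) // orbF => /eqP.
Qed.

End Adjoint.

Section BitStrings.
Variables (R : realType) (n : nat).
Local Notation C := (complex R).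
Local Notation Mat := 'M[C]_(qdim n).
Local Notation B := (bits n).
Implicit Types (x y z : B) (T : {set 'I_n}) (A : Mat).

Definition bits0 : B := [ffun => false].

Definition setbit x i b : B := [ffun k => if k == i then b else x k].

Definition bitmx (f : B -> B -> C) : Mat :=
  \matrix_(p, q) f (enum_val p) (enum_val q).

Lemma setbitE x i b k : setbit x i b k = if k == i then b else x k.
Proof. by rewrite ffunE. Qed.

Lemma setbit_eq x i b : setbit x i b i = b.
Proof. by rewrite setbitE eqxx. Qed.

Lemma setbitK x i b c : setbit (setbit x i b) i c = setbit x i c.
Proof. by apply/ffunP => k; rewrite !setbitE; case: (k == i). Qed.

Lemma setbit_id x i : setbit x i (x i) = x.
Proof. by apply/ffunP => k; rewrite setbitE; case: eqP => // ->. Qed.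

Lemma entry_bitmx f x y : entry (bitmx f) x y = f x y.
Proof. by rewrite /entry mxE !enum_rankK. Qed.

Lemma eq_bitmx (f g : B -> B -> C) : (forall x y, f x y = g x y) -> bitmx f = bitmx g.
Proof. by move=> fg; apply/matrixP => p q; rewrite !mxE fg. Qed.

Lemma sum_enum_rank (F : 'I_(qdim n) -> C) : \sum_p F p = \sum_x F (enum_rank x).
Proof. by rewrite (reindex enum_rank) //; apply: onW_bij; exact: enum_rank_bij. Qed.

Lemma mxtrace_entry A : \tr A = \sum_x entry A x x.
Proof. exact: sum_enum_rank. Qed.

Lemma mxtrace_bitmx f : \tr (bitmx f) = \sum_x f x x.
Proof. by rewrite mxtrace_entry; apply: eq_bigr => x _; rewrite entry_bitmx. Qed.

Lemma quad_entry A (v : 'cV[C]_(qdim n)) : (adj v *m A *m v) 0 0 =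
  \sum_x \sum_y (v (enum_rank x) 0)^* * entry A x y * v (enum_rank y) 0.
Proof.
rewrite quadE sum_enum_rank; apply: eq_bigr => x _.
by rewrite sum_enum_rank; apply: eq_bigr.
Qed.

Lemma adj_entry A x y : adj A = A -> entry A x y = (entry A y x)^*.
Proof. by move=> hA; rewrite /entry -{1}hA adjE. Qed.

Lemma mergeE T x z k : Defs.merge T x z k = if k \in T then x k else z k.
Proof. by rewrite ffunE. Qed.

Lemma merge_setbit T i x z b : i \in T ->
  Defs.merge T (setbit x i b) z = setbit (Defs.merge T x z) i b.
Proof.
move=> iT; apply/ffunP => k; rewrite !(mergeE, setbitE).
by case: eqP => [-> |]; rewrite ?iT.
Qed.

Lemma eq_ptrace T A x x' y y' :
  {in T, x =1 x'} -> {in T, y =1 y'} -> ptrace T A x y = ptrace T A x' y'.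
Proof.
have eq_merge (u u' : B) z : {in T, u =1 u'} -> Defs.merge T u z = Defs.merge T u' z.
  by move=> uu; apply/ffunP => k; rewrite !mergeE; case: ifP => // /uu.
by move=> xx yy; apply: eq_bigr => z _; rewrite (eq_merge _ _ _ xx) (eq_merge _ _ _ yy).
Qed.

Lemma ptrace_setT A x y : ptrace setT A x y = entry A x y.
Proof.
have mergeT u : Defs.merge setT u bits0 = u by apply/ffunP => k; rewrite mergeE in_setT.
rewrite /ptrace (big_pred1 bits0); first by rewrite !mergeT.
move=> z; apply/forallP/eqP => [z0|->].
  by apply/ffunP => k; have := z0 k; rewrite in_setT ffunE /=; case: (z k).
by move=> k; rewrite ffunE implybT.
Qed.

Lemma ptrace_set0 A x y : ptrace set0 A x y = \tr A.
Proof.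
rewrite mxtrace_entry /ptrace (eq_bigl xpredT); last first.
  by move=> z; apply/forallP => k; rewrite in_set0.
have merge0 u z : Defs.merge set0 u z = z by apply/ffunP => k; rewrite mergeE in_set0.
by apply: eq_bigr => z _; rewrite !merge0.
Qed.

Lemma ptrace_setbitr T A i x y b : i \in T ->
  ptrace T A x (setbit y i b) =
  \sum_(z : B | [forall k, (k \in T) ==> ~~ z k]) entry A (Defs.merge T x z) (setbit (Defs.merge T y z) i b).
Proof. by move=> iT; apply: eq_bigr => z _; rewrite merge_setbit. Qed.

Lemma ptrace_setbitl T A i x y b : i \in T ->
  ptrace T A (setbit x i b) y =
  \sum_(z : B | [forall k, (k \in T) ==> ~~ z k]) entry A (setbit (Defs.merge T x z) i b) (Defs.merge T y z).
Proof. by move=> iT; apply: eq_bigr => z _; rewrite merge_setbit. Qed.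

Lemma ptrace_setD1 T A i x y : i \in T ->
  ptrace (T :\ i) A x y = \sum_b ptrace T A (setbit x i b) (setbit y i b).
Proof.
move=> iT; rewrite /ptrace (partition_big (fun z : B => z i) predT) //.
apply: eq_bigr => b _.
rewrite (reindex_onto (fun z => setbit z i b) (fun z => setbit z i false)); last first.
  by move=> z /andP[_ /eqP <-]; rewrite setbitK setbit_id.
apply: eq_big => [z|z _]; last first.
  congr entry; apply/ffunP => k; rewrite !(mergeE, setbitE) in_setD1;
    by case: eqP => [->|_] //=; rewrite ?iT.
rewrite setbit_eq eqxx andbT.
apply/andP/forallP => [[/forallP zT /eqP zi] k|zT].
  apply/implyP => kT; case: (k =P i) => [->|/eqP ki]; first by rewrite -zi setbitE eqxx.
  by have := zT k; rewrite in_setD1 ki kT setbitE (negbTE ki).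
split.
  apply/forallP => k; apply/implyP; rewrite in_setD1 => /andP[ki kT].
  by rewrite setbitE (negbTE ki); exact: (implyP (zT k)).
apply/eqP/ffunP => k; rewrite !setbitE; case: eqP => [->|//].
by apply/esym/negbTE; exact: (implyP (zT i)).
Qed.

Lemma ptrace1 A i x y :
  ptrace [set i] A x y = \sum_(z : B | ~~ z i) entry A (setbit z i (x i)) (setbit z i (y i)).
Proof.
apply: eq_big => [z|z _].
  apply/forallP/idP => [zi|zi k]; first by have := zi i; rewrite in_set1 eqxx.
  by rewrite in_set1; apply/implyP => /eqP ->.
by congr entry; apply/ffunP => k; rewrite mergeE setbitE in_set1; case: eqP => [->|].
Qed.

End BitStrings.
Arguments bits0 {n}.

Section PureQubit.
Variables (R : realType) (n : nat).
Local Notation C := (complex R).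
Local Notation Mat := 'M[C]_(qdim n).
Local Notation B := (bits n).
Implicit Types (x y z : B) (T : {set 'I_n}) (A : Mat).

Definition bitvec (w : bool -> C) i z : 'cV[C]_(qdim n) :=
  \col_r \sum_b w b * (r == enum_rank (setbit z i b))%:R.

Lemma sum_pick (F : 'I_(qdim n) -> C) (c : bool -> C) (g : bool -> B) :
  \sum_r F r * (\sum_b c b * (r == enum_rank (g b))%:R) = \sum_b c b * F (enum_rank (g b)).
Proof.
under eq_bigr => r _ do rewrite mulr_sumr.
rewrite exchange_big; apply: eq_bigr => b _.
rewrite (bigD1 (enum_rank (g b))) // eqxx mulr1 big1 => [|r]; first by rewrite [LHS]/= addr0 mulrC.
by rewrite andTb => /negbTE ->; rewrite !mulr0.
Qed.

Lemma mulmx_bitvec A w i z p :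
  (A *m bitvec w i z) p 0 = \sum_b w b * A p (enum_rank (setbit z i b)).
Proof. by rewrite mxE; under eq_bigr => r _ do rewrite mxE; rewrite sum_pick. Qed.

Lemma quad_bitvec A w i z : (adj (bitvec w i z) *m A *m bitvec w i z) 0 0 =
  \sum_p \sum_q (w p)^* * entry A (setbit z i p) (setbit z i q) * w q.
Proof.
have conj_bitvec r : (bitvec w i z r 0)^* =
    \sum_b (w b)^* * (r == enum_rank (setbit z i b))%:R.
  by rewrite mxE rmorph_sum; apply: eq_bigr => b _; rewrite rmorphM rmorph_nat.
rewrite -mulmxA mxE.
under eq_bigr => r _ do rewrite adjE mulmx_bitvec conj_bitvec mulrC.
rewrite sum_pick; apply: eq_bigr => p _; rewrite mulr_sumr; apply: eq_bigr => q _.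
by rewrite /entry; ring.
Qed.

Lemma quad_marginal1 A i (w : bool -> C) :
  \sum_p \sum_q (w p)^* * ptrace [set i] A (setbit bits0 i p) (setbit bits0 i q) * w q =
  \sum_(z : B | ~~ z i) (adj (bitvec w i z) *m A *m bitvec w i z) 0 0.
Proof.
under eq_bigr => p _ do under eq_bigr => q _ do
  rewrite ptrace1 !setbit_eq mulr_sumr mulr_suml.
under eq_bigr => p _ do rewrite exchange_big.
by rewrite exchange_big; apply: eq_bigr => z _; rewrite quad_bitvec.
Qed.

Section MarginalKernel.
Variables (A : Mat) (i : 'I_n) (w : bool -> C).
Hypothesis A_density : is_density A.
Hypothesis marginal_w :
  \sum_p \sum_q (w p)^* * ptrace [set i] A (setbit bits0 i p) (setbit bits0 i q) * w q = 0.

Lemma kernel_col x y : \sum_b entry A x (setbit y i b) * w b = 0.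
Proof.
case: A_density => A_herm A_psd _.
have quad0 := @psumr_eq0P _ _ (fun z : B => ~~ z i)
  (fun z => (adj (bitvec w i z) *m A *m bitvec w i z) 0 0) (fun z _ => A_psd _).
rewrite -quad_marginal1 in quad0; move/(_ marginal_w) in quad0.
have := psd_quad_eq0 A_herm A_psd (quad0 (setbit y i false) (negbT (setbit_eq _ _ _))).
move/matrixP/(_ (enum_rank x) 0); rewrite mulmx_bitvec mxE => h; rewrite -[RHS]h.
by apply: eq_bigr => b _; rewrite setbitK mulrC.
Qed.

Lemma kernel_row x y : \sum_b (w b)^* * entry A (setbit x i b) y = 0.
Proof.
case: A_density => A_herm _ _.
have := congr1 Num.conj (kernel_col y x); rewrite rmorph_sum rmorph0 => h.
rewrite -[RHS]h.
by apply: eq_bigr => b _; rewrite rmorphM mulrC (adj_entry _ _ A_herm).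
Qed.

Lemma ptrace_kernel_col T x y : i \in T -> \sum_b ptrace T A x (setbit y i b) * w b = 0.
Proof.
move=> iT; under eq_bigr => b _ do rewrite ptrace_setbitr // mulr_suml.
by rewrite exchange_big big1 // => z _; exact: kernel_col.
Qed.

Lemma ptrace_kernel_row T x y : i \in T -> \sum_b (w b)^* * ptrace T A (setbit x i b) y = 0.
Proof.
move=> iT; under eq_bigr => b _ do rewrite ptrace_setbitl // mulr_sumr.
by rewrite exchange_big big1 // => z _; exact: kernel_row.
Qed.

End MarginalKernel.

Definition norm2 (w : bool -> C) := \sum_b w b * (w b)^*.

Definition orth (w : bool -> C) (b : bool) := if b then - w false else w true.

(* A 2x2 block [M] with [M w = 0] and [w^* M = 0] is a multiple of [u^* u^T],
   where [u = orth w] is the nonzero vector with [u^T w = 0] (if [w <> 0]); the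
   multiple is fixed by the trace of [M]. *)
Lemma kernel_block_factor (F : B -> B -> C) (w : bool -> C) i :
  (forall x y, \sum_b F x (setbit y i b) * w b = 0) ->
  (forall x y, \sum_b (w b)^* * F (setbit x i b) y = 0) ->
  forall x y, norm2 w * F x y =
    (orth w (x i))^* * orth w (y i) * \sum_b F (setbit x i b) (setbit y i b).
Proof.
move=> Fw wF x y.
have e1 := Fw (setbit x i false) y; have e2 := Fw (setbit x i true) y.
have e3 := wF x (setbit y i false); have e4 := wF x (setbit y i true).
rewrite !big_bool /= in e1 e2 e3 e4.
rewrite /norm2 /orth !big_bool /= -[in LHS](setbit_id x i) -[in LHS](setbit_id y i).
move: e1 e2 e3 e4; case: (x i); case: (y i); rewrite ?conjCN;
set F00 := F (setbit x i false) (setbit y i false);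
set F01 := F (setbit x i false) (setbit y i true);
set F10 := F (setbit x i true) (setbit y i false);
set F11 := F (setbit x i true) (setbit y i true);
move: (w false) (w true) => w0 w1; move: (w0^*) (w1^*) => c0 c1 e1 e2 e3 e4;
apply/eqP; rewrite -subr_eq0; apply/eqP.
- transitivity (w1 * (c1 * F11 + c0 * F01) - c0 * (F01 * w1 + F00 * w0)); first by ring.
  by rewrite e1 e4; ring.
- transitivity (c0 * (F11 * w1 + F10 * w0) + w1 * (c1 * F10 + c0 * F00)); first by ring.
  by rewrite e2 e3; ring.
- transitivity (w0 * (c1 * F11 + c0 * F01) + c1 * (F01 * w1 + F00 * w0)); first by ring.
  by rewrite e1 e4; ring.
- transitivity (c0 * (F01 * w1 + F00 * w0) - w1 * (c1 * F11 + c0 * F01)); first by ring.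
  by rewrite e1 e4; ring.
Qed.

End PureQubit.

Section PureMarginals.
Variables (R : realType) (n : nat).
Local Notation C := (complex R).
Local Notation Mat := 'M[C]_(qdim n).
Implicit Types (T : {set 'I_n}) (A : Mat).

Definition bit_ord (b : bool) : 'I_2 := if b then ord_max else ord0.

Lemma bit_ordK (a : 'I_2) : bit_ord (a != ord0) = a.
Proof. by apply/val_inj; case: a => [[|[|]]]. Qed.

Lemma sum_ord2 (f : 'I_2 -> C) : \sum_a f a = \sum_b f (bit_ord b).
Proof.
rewrite big_bool big_ord_recr big_ord1 /= addrC /bit_ord.
by congr (_ + f _); apply/val_inj.
Qed.

Lemma marginal1E A i p q :
  ptrace [set i] A (setbit bits0 i p) (setbit bits0 i q) = marginal1 i A (bit_ord p) (bit_ord q).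
Proof.
rewrite mxE; apply: eq_ptrace => k; rewrite in_set1 => /eqP ->;
  rewrite setbit_eq ffunE eqxx; [by case: p | by case: q].
Qed.

Lemma rank1_left_kernel (M : 'M[C]_2) :
  \rank M = 1%N -> exists2 v : 'rV_2, v != 0 & v *m M = 0.
Proof.
move=> r1; apply/det0P; apply: contraT => d0.
have : M \in unitmx by rewrite unitmxE unitfE.
by rewrite -row_free_unit /row_free r1.
Qed.

Section PureQubitReduction.
Variables (A : Mat) (i : 'I_n) (v : 'rV[C]_2).
Hypothesis A_density : is_density A.
Hypothesis v_kernel : v *m marginal1 i A = 0.
Let w (b : bool) := (v 0 (bit_ord b))^*.

Lemma marginal1_quad_kernel :
  \sum_p \sum_q (w p)^* * ptrace [set i] A (setbit bits0 i p) (setbit bits0 i q) * w q = 0.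
Proof.
under eq_bigr => p _ do under eq_bigr => q _ do rewrite marginal1E /w conjCK.
rewrite exchange_big big1 // => q _.
rewrite -mulr_suml -(sum_ord2 (fun a => v 0 a * marginal1 i A a (bit_ord q))).
have := congr1 (fun M : 'rV_2 => M 0 (bit_ord q)) v_kernel; rewrite !mxE => ->.
by rewrite mul0r.
Qed.

(* Hence [rho_T] is determined by [rho_(T :\ i)] when qubit [i] has a pure marginal. *)
Lemma ptrace_pure_qubit T x y : i \in T ->
  norm2 w * ptrace T A x y =
  (orth w (x i))^* * orth w (y i) * ptrace (T :\ i) A x y.
Proof.
move=> iT; rewrite ptrace_setD1 //.
apply: (kernel_block_factor (F := ptrace T A)) => x' y'.
  exact: (ptrace_kernel_col A_density marginal1_quad_kernel).
exact: (ptrace_kernel_row A_density marginal1_quad_kernel).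
Qed.

Lemma norm2_neq0 : v != 0 -> norm2 w != 0.
Proof.
apply: contra => /eqP w0; apply/eqP/matrixP => a b; rewrite (ord1 a) mxE -(bit_ordK b).
have ge0 c : predT c -> 0 <= w c * (w c)^* by move=> _; exact: mul_conjC_ge0.
move/eqP: (psumr_eq0P ge0 w0 (i := b != ord0) isT); rewrite mul_conjC_eq0 /w.
by move/eqP/(congr1 Num.conj); rewrite conjCK rmorph0.
Qed.

End PureQubitReduction.

Lemma singletons_determine (rho : Mat) j : is_density rho ->
  (forall i, i != j -> \rank (marginal1 i rho) = 1%N) ->
  determines rho [set [set i] | i : 'I_n].
Proof.
move=> rho_density pure sigma sigma_density same.
have same1 i : same_marginal [set i] sigma rho by apply: same; apply/imsetP; exists i.
have ptrace_eq k T : (#|T| <= k)%N -> j \in T -> forall x y,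
    ptrace T sigma x y = ptrace T rho x y.
  elim: k T => [|k IH] T cardT jT x y.
    by move: cardT; rewrite leqn0 cards_eq0 => /eqP T0; rewrite T0 in_set0 in jT.
  have [->|T_neq] := eqVneq T [set j]; first exact: same1.
  have : T :\ j != set0.
    by apply: contra T_neq => /eqP T0; rewrite -(setD1K jT) T0 setU0.
  case/set0Pn => i; rewrite in_setD1 => /andP[ij iT].
  have [v v0 v_ker] := rank1_left_kernel (pure i ij).
  have v_ker' : v *m marginal1 i sigma = 0.
    by rewrite -v_ker; congr (_ *m _); apply/matrixP => a b; rewrite !mxE same1.
  apply: (mulfI (norm2_neq0 v0)).
  rewrite (ptrace_pure_qubit sigma_density v_ker') // (ptrace_pure_qubit rho_density v_ker) //.
  congr (_ * _); apply: IH; last by rewrite in_setD1 eq_sym ij.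
  by move: cardT; rewrite (cardsD1 i T) iT add1n ltnS.
apply/matrixP => p q.
have := ptrace_eq _ setT (leqnn _) (in_setT j) (enum_val p) (enum_val q).
by rewrite !ptrace_setT /entry !enum_valK.
Qed.

End PureMarginals.

Section DensityMatrices.
Variables (R : realType) (n : nat).
Local Notation C := (complex R).
Local Notation Mat := 'M[C]_(qdim n).
Local Notation B := (bits n).
Implicit Types (x y : B) (S : {set 'I_n}) (A : Mat).

Lemma Lval_leq (rho : Mat) SS k : determines rho SS ->
  (\max_(S in SS) #|S| <= k)%N -> (Lval rho <= k)%N.
Proof.
move=> det_SS; apply: leq_trans; rewrite /Lval -minEnat.
exact: (@bigmin_le_cond _ nat _ n SS (fun SS => `[< determines rho SS >]) _ (asboolT det_SS)).
Qed.

Lemma leq_Lval (rho : Mat) k : (k <= n)%N ->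
  (forall SS, determines rho SS -> k <= \max_(S in SS) #|S|)%N -> (k <= Lval rho)%N.
Proof.
move=> kn kSS; rewrite /Lval; elim/big_ind: _ => // [a b ka kb|SS /asboolP]; last exact: kSS.
by rewrite leq_min ka kb.
Qed.

Lemma same_marginal0 A A' : is_density A -> is_density A' -> same_marginal set0 A A'.
Proof. by case=> _ _ trA [_ _ trA'] x y; rewrite !ptrace_set0 trA trA'. Qed.

Lemma same_marginal_small A A' : is_density A -> is_density A' ->
  (forall i, same_marginal [set i] A A') ->
  forall S, (#|S| <= 1)%N -> same_marginal S A A'.
Proof.
move=> dA dA' same1 S; rewrite leq_eqVlt ltnS leqn0 => /orP[/cards1P[i ->] //|].
by rewrite cards_eq0 => /eqP ->; apply: same_marginal0.
Qed.

Definition gram (J : finType) (W : J -> C) (G : B -> J -> C) x y :=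
  \sum_z W z * (G x z * (G y z)^*).

Lemma gram_density (J : finType) (W : J -> C) (G : B -> J -> C) :
  (forall z, 0 <= W z) -> \tr (bitmx (gram W G)) = 1 -> is_density (bitmx (gram W G)).
Proof.
move=> W_ge0 tr1; split => //.
  apply/matrixP => p q; rewrite adjE !mxE /gram conjC_sum; apply: eq_bigr => z _.
  by rewrite !conjCM conjCK (geC0_conj (W_ge0 z)); ring.
move=> v; rewrite quad_entry.
pose c x := (v (enum_rank x) 0)^*.
have -> : \sum_x \sum_y (v (enum_rank x) 0)^* * entry (bitmx (gram W G)) x y * v (enum_rank y) 0 =
    \sum_z W z * ((\sum_x c x * G x z) * (\sum_x c x * G x z)^*).
  under [RHS]eq_bigr => z _ do rewrite conjC_sum mulr_suml mulr_sumr.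
  under [RHS]eq_bigr => z _ do under eq_bigr => x _ do rewrite !mulr_sumr.
  rewrite [RHS]exchange_big; apply: eq_bigr => x _.
  rewrite [RHS]exchange_big; apply: eq_bigr => y _.
  rewrite entry_bitmx /gram mulr_sumr mulr_suml; apply: eq_bigr => z _.
  by rewrite /c !conjCM conjCK; ring.
by apply: sumr_ge0 => z _; rewrite mulr_ge0 ?mul_conjC_ge0.
Qed.

Definition basis_state x0 : Mat :=
  bitmx (gram (fun _ : 'I_1 => 1) (fun x _ => (x == x0)%:R)).

Lemma entry_basis_state x0 x : entry (basis_state x0) x x = (x == x0)%:R.
Proof. by rewrite entry_bitmx /gram big_ord1 rmorph_nat -natrM mulnb andbb mul1r. Qed.

Lemma basis_state_density x0 : is_density (basis_state x0).
Proof.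
apply: gram_density => [_|]; first exact: ler01.
rewrite -/(basis_state x0) mxtrace_entry; under eq_bigr => x _ do rewrite entry_basis_state.
rewrite (bigD1 x0) //= eqxx big1 => [|x /negbTE -> //]; exact: addr0.
Qed.

(* Two distinct basis states share all their (trivial) marginals on the empty set. *)
Lemma Lval_ge1 (rho : Mat) : (1 <= n)%N -> is_density rho -> (1 <= Lval rho)%N.
Proof.
move=> n_gt0 rho_density; apply: leq_Lval => // SS det_SS.
rewrite lt0n; apply/negP => /eqP max0.
have S0 S : S \in SS -> S = set0.
  move=> SS_S; apply/eqP; rewrite -cards_eq0 -leqn0 -max0.
  exact: (leq_bigmax_cond (F := fun S : {set 'I_n} => #|S|)).
have basis_rho x0 : basis_state x0 = rho.
  apply: det_SS => [|S /S0 ->]; first exact: basis_state_density.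
  by apply: same_marginal0 => //; exact: basis_state_density.
pose x1 : B := [ffun => true].
have x01 : bits0 != x1 by apply/eqP => /ffunP /(_ (Ordinal n_gt0)); rewrite !ffunE.
have := congr1 (fun M => entry M bits0 bits0) (etrans (basis_rho bits0) (esym (basis_rho x1))).
by rewrite /= !entry_basis_state eqxx (negbTE x01) => /eqP; rewrite oner_eq0.
Qed.

End DensityMatrices.

Section PsdBlock2.
Variables (C : numClosedFieldType) (G : bool -> bool -> C).
Hypothesis G_herm : forall p q, (G p q)^* = G q p.
Hypothesis G_psd : forall al : bool -> C, 0 <= \sum_p \sum_q (al p)^* * G p q * al q.

Lemma psd2 (a b : C) : 0 <=
  a^* * G true true * a + a^* * G true false * b + (b^* * G false true * a + b^* * G false false * b).
Proof. by have := G_psd (fun p => if p then a else b); rewrite !big_bool. Qed.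

Lemma psd2_diag_ge0 p : 0 <= G p p.
Proof.
by case: p; [have := psd2 1 0 | have := psd2 0 1];
  rewrite conjC0 conjC1 !(mul0r, mulr0, add0r, addr0, mul1r, mulr1).
Qed.

Lemma psd2_offdiag_eq0 : G false false = 0 -> G false true = 0.
Proof.
move=> G00; apply/eqP; apply: contraT => G01.
have G10 : G true false != 0 by rewrite -G_herm conjC_eq0.
have := psd2 1 (- ((G true true + 1) / G true false)).
rewrite conjC1 !mul1r !mulr1 G00 mulr0 mul0r addr0 conjCN conjC_div conjCD conjC1 !G_herm.
have -> : G true true + G true false * - ((G true true + 1) / G true false) +
    - ((G true true + 1) / G false true) * G false true = - (G true true + 2).
  by field; rewrite G01 G10.
rewrite oppr_ge0 => le0; have d2_gt0 : 0 < G true true + 2 by rewrite ltr_wpDl ?psd2_diag_ge0.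
by have := lt_le_trans d2_gt0 le0; rewrite ltxx.
Qed.

(* The LDL^* factorisation [G = L diag(d) L^*], with [L = [1 0; l 1]],
   [l = G10 / G00] and the Schur complement [d1 = G11 - G01 G10 / G00].  When
   [G00 = 0] the divisions return [0], which is still correct because then
   [G01 = G10 = 0]. *)
Definition ldl_d (c : bool) :=
  if c then G true true - G false true * G true false / G false false else G false false.

Definition ldl_L (p c : bool) : C :=
  if c then (if p then 1 else 0) else if p then G true false / G false false else 1.

Definition ldl_term p q c := ldl_L p c * (ldl_L q c)^* * ldl_d c.

Definition ldl_weight c := \sum_p ldl_term p p c.

Lemma ldl_d_ge0 c : 0 <= ldl_d c.
Proof.
case: c; rewrite /ldl_d ?psd2_diag_ge0 //.
have [G00|G00] := eqVneq (G false false) 0.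
  by rewrite psd2_offdiag_eq0 // !mul0r subr0 psd2_diag_ge0.
have := psd2 1 (- (G false true / G false false)).
rewrite conjC1 !mul1r !mulr1 conjCN conjC_div !G_herm.
by congr (0 <= _); field.
Qed.

Lemma ldl_termE p q : \sum_c ldl_term p q c = G p q.
Proof.
rewrite big_bool /ldl_term /ldl_L /ldl_d.
have [G00|G00] := eqVneq (G false false) 0.
  have G01 := psd2_offdiag_eq0 G00.
  have G10 : G true false = 0 by rewrite -G_herm G01 conjC0.
  by case: p; case: q; rewrite /= ?conjC0 ?conjC1 ?G00 ?G01 ?G10 ?invr0; ring.
by case: p; case: q; rewrite /= ?conjC0 ?conjC1 ?conjC_div ?G_herm; field.
Qed.

Lemma ldl_weight_ge0 c : 0 <= ldl_weight c.
Proof. by apply: sumr_ge0 => p _; rewrite /ldl_term mulr_ge0 ?mul_conjC_ge0 ?ldl_d_ge0. Qed.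

Lemma ldl_weightE : ldl_weight true + ldl_weight false = G true true + G false false.
Proof. by rewrite -big_bool /ldl_weight exchange_big big_bool !ldl_termE. Qed.

Lemma ldl_weight_true : ldl_weight true = ldl_d true.
Proof. by rewrite /ldl_weight big_bool /ldl_term /= conjC1 conjC0 !mul1r !mul0r addr0. Qed.

Lemma ldl_term00 : ldl_term false false true = 0 /\ ldl_term false false false = G false false.
Proof. by rewrite /ldl_term /ldl_L /= conjC1 conjC0 !mul1r !mul0r. Qed.

Lemma ldl_nondegenerate :
  (1 < \rank (\matrix_(a < 2, b < 2) G (a != ord0) (b != ord0)))%N ->
  G false false != 0 /\ ldl_d true != 0.
Proof.
have rank_le1 c : ldl_d (~~ c) = 0 ->
    (\rank (\matrix_(a < 2, b < 2) G (a != ord0) (b != ord0)) <= 1)%N.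
  move=> d0; rewrite (_ : \matrix_(a, b) _ = (\col_(a < 2) (ldl_L (a != ord0) c * ldl_d c)) *m
      (\row_(b < 2) (ldl_L (b != ord0) c)^*)); first exact: mulmx_max_rank.
  apply/matrixP => a b; rewrite !mxE big_ord1 !mxE -ldl_termE big_bool.
  by case: c d0 => d0; rewrite /ldl_term d0 mulr0 /=; ring.
move=> rank_gt1; split; apply/eqP => d0;
  [have := rank_le1 true d0 | have := rank_le1 false d0]; by rewrite leqNgt rank_gt1.
Qed.

End PsdBlock2.

Section ProductMatrices.
Variables (R : realType) (n : nat).
Local Notation C := (complex R).
Local Notation Mat := 'M[C]_(qdim n).
Local Notation B := (bits n).

Definition prodmx (F : 'I_n -> bool -> bool -> C) : Mat :=
  bitmx (fun x y => \prod_m F m (x m) (y m)).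

Lemma ptraceD T (A A' : Mat) x y : ptrace T (A + A') x y = ptrace T A x y + ptrace T A' x y.
Proof. by rewrite /ptrace -big_split; apply: eq_bigr => z _; rewrite /entry mxE. Qed.

Lemma mxtrace_prodmx F : \tr (prodmx F) = \prod_m \sum_p F m p p.
Proof. by rewrite mxtrace_bitmx bigA_distr_bigA. Qed.

Lemma ptrace1_prodmx F i x y : ptrace [set i] (prodmx F) x y =
  F i (x i) (y i) * \prod_(m | m != i) \sum_p F m p p.
Proof.
pose H m c := if m == i then (if c then 0 else F i (x i) (y i)) else F m c c.
rewrite ptrace1 big_mkcond (eq_bigr (fun z : B => \prod_m H m (z m))); last first.
  move=> z _; rewrite entry_bitmx [in RHS](bigD1 i) //= {1}/H eqxx.
  case: (z i); first by rewrite mul0r.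
  rewrite (bigD1 i) //= !setbit_eq; congr (_ * _); apply: eq_bigr => m mi.
  by rewrite /H (negbTE mi) !setbitE (negbTE mi).
rewrite -(bigA_distr_bigA H) (bigD1 i) //= big_bool /= {1 2}/H eqxx add0r.
by congr (_ * _); apply: eq_bigr => m mi; apply: eq_bigr => p _; rewrite /H (negbTE mi).
Qed.

End ProductMatrices.

Section MixedMarginals.
Variables (R : realType) (n : nat) (rho : 'M[complex R]_(qdim n)).
Local Notation C := (complex R).
Local Notation Mat := 'M[C]_(qdim n).
Local Notation B := (bits n).
Hypothesis rho_density : is_density rho.

Definition marg m p q := ptrace [set m] rho (setbit bits0 m p) (setbit bits0 m q).

Lemma ptrace1_marg m x y : ptrace [set m] rho x y = marg m (x m) (y m).
Proof. by apply: eq_ptrace => k; rewrite in_set1 => /eqP ->; rewrite setbit_eq. Qed.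

Lemma marginal1_marg m (a b : 'I_2) : marginal1 m rho a b = marg m (a != ord0) (b != ord0).
Proof. by rewrite /marg marginal1E !bit_ordK. Qed.

Lemma marg_herm m p q : (marg m p q)^* = marg m q p.
Proof.
case: rho_density => rho_herm _ _.
rewrite /marg !ptrace1 !setbit_eq conjC_sum; apply: eq_bigr => z _.
by rewrite [in RHS](adj_entry _ _ rho_herm).
Qed.

Lemma marg_psd m (al : bool -> C) : 0 <= \sum_p \sum_q (al p)^* * marg m p q * al q.
Proof.
case: rho_density => _ rho_psd _.
by rewrite quad_marginal1 sumr_ge0 // => z _; exact: rho_psd.
Qed.

Lemma marg_trace m : marg m true true + marg m false false = 1.
Proof.
case: rho_density => _ _ tr1.
have := ptrace_setD1 rho bits0 bits0 (set11 m).
by rewrite setDv ptrace_set0 tr1 big_bool => ->; rewrite /= addrC.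
Qed.

Lemma ldl_weight_le1 m c : ldl_weight (marg m) c <= 1.
Proof.
have := ldl_weightE (marg_herm m) (marg_psd m); rewrite marg_trace => <-.
have w_ge0 := ldl_weight_ge0 (marg_herm m) (marg_psd m).
by case: c; rewrite ?lerDl ?lerDr w_ge0.
Qed.

Lemma marginal1_neq0 m : marginal1 m rho != 0.
Proof.
apply/eqP => /matrixP M0; have := marg_trace m.
by rewrite -(marginal1_marg m ord_max ord_max) -(marginal1_marg m ord0 ord0) !M0 !mxE addr0;
  move/eqP; rewrite eq_sym oner_eq0.
Qed.

Lemma marg_nondegenerate m : \rank (marginal1 m rho) != 1%N ->
  marg m false false != 0 /\ ldl_d (marg m) true != 0.
Proof.
move=> rank_neq1; apply: ldl_nondegenerate; [exact: marg_herm | exact: marg_psd |].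
have -> : \matrix_(a, b) marg m (a != ord0) (b != ord0) = marginal1 m rho.
  by apply/matrixP => a b; rewrite mxE marginal1_marg.
by rewrite ltn_neqAle eq_sym rank_neq1 lt0n mxrank_eq0 marginal1_neq0.
Qed.

Definition reweight (phi : 'I_n -> bool -> C) m p q := \sum_c phi m c * ldl_term (marg m) p q c.

Definition ldl_gram (W : B -> C) : Mat :=
  bitmx (gram W (fun x z => \prod_m ldl_L (marg m) (x m) (z m))).

Lemma reweight_gram phi : prodmx (reweight phi) =
  ldl_gram (fun z => \prod_m (phi m (z m) * ldl_d (marg m) (z m))).
Proof.
apply: eq_bitmx => x y; rewrite /gram bigA_distr_bigA; apply: eq_bigr => z _.
by rewrite conjC_prod -!big_split; apply: eq_bigr => m _; rewrite /ldl_term /=; ring.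
Qed.

Lemma ldl_gramD W W' : ldl_gram W + ldl_gram W' = ldl_gram (fun z => W z + W' z).
Proof.
apply/matrixP => p q; rewrite !mxE /gram -big_split.
by apply: eq_bigr => z _; rewrite mulrDl.
Qed.

Lemma reweight1 m p q : reweight (fun _ _ => 1) m p q = marg m p q.
Proof.
rewrite -(ldl_termE (marg_herm m) (marg_psd m)).
by apply: eq_bigr => c _; rewrite mul1r.
Qed.

Lemma trace_twist1 m : \sum_p reweight (fun _ _ => 1) m p p = 1.
Proof. by rewrite big_bool /= !reweight1 marg_trace. Qed.

Definition prod_state := prodmx (reweight (fun _ _ => 1)).

Lemma prod_state_density : is_density prod_state.
Proof.
have tr1 : \tr prod_state = 1 by rewrite mxtrace_prodmx big1 // => m _; exact: trace_twist1.
rewrite /prod_state reweight_gram in tr1 *; apply: gram_density tr1 => z.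
by apply: prodr_ge0 => m _; rewrite mul1r ldl_d_ge0 //; [exact: marg_herm | exact: marg_psd].
Qed.

Lemma prod_state_marginal m : same_marginal [set m] prod_state rho.
Proof.
move=> x y; rewrite ptrace1_prodmx big1 => [|m' _]; last exact: trace_twist1.
by rewrite mulr1 reweight1 ptrace1_marg.
Qed.

Section Perturbation.
Variables i k : 'I_n.
Hypothesis ik : i != k.

(* On qubits [i] and [k] the LDL terms, of traces [(w0, w1)], are reweighted by
   [(w1, - w0)]: tracing out [i] or [k] kills the perturbation, and every
   single-qubit marginal traces out one of them.  Positivity of the perturbed
   state comes from [0 <= w0, w1 <= 1]. *)
Definition pert m c : C :=
  if (m == i) || (m == k) then (if c then - ldl_weight (marg m) false else ldl_weight (marg m) true) else 1.

Definition pert_state := prod_state + prodmx (reweight pert).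

Lemma prod_pert (z : B) : \prod_m pert m (z m) = pert i (z i) * pert k (z k).
Proof.
rewrite (bigD1 i) //= (bigD1 k) 1?eq_sym //= big1 ?mulr1 // => m /andP[mi mk].
by rewrite /pert (negbTE mi) (negbTE mk).
Qed.

Lemma pert_weight_ge0 c c' : 0 <= 1 + pert i c * pert k c'.
Proof.
have w_ge0 m c0 : 0 <= ldl_weight (marg m) c0.
  by apply: ldl_weight_ge0; [exact: marg_herm | exact: marg_psd].
rewrite /pert !eqxx orbT /=.
case: c; case: c'; rewrite ?mulrNN ?mulrN ?mulNr ?subr_ge0.
- by rewrite addr_ge0 ?ler01 ?mulr_ge0.
- by apply: mulr_ile1; rewrite ?w_ge0 ?ldl_weight_le1.
- by apply: mulr_ile1; rewrite ?w_ge0 ?ldl_weight_le1.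
- by rewrite addr_ge0 ?ler01 ?mulr_ge0.
Qed.

Lemma trace_twist_pert m : (m == i) || (m == k) -> \sum_p reweight pert m p p = 0.
Proof.
move=> mik; rewrite /reweight exchange_big big_bool -!mulr_sumr /pert mik.
by rewrite -/(ldl_weight (marg m) true) -/(ldl_weight (marg m) false) /=; ring.
Qed.

Lemma reweight_pert_other m p q : ~~ ((m == i) || (m == k)) -> reweight pert m p q = marg m p q.
Proof. by move=> mik; rewrite -reweight1; apply: eq_bigr => c _; rewrite /pert (negbTE mik). Qed.

Lemma reweight_pert00 m : (m == i) || (m == k) ->
  reweight pert m false false = ldl_d (marg m) true * marg m false false.
Proof.
move=> mik; have [t1 t0] := ldl_term00 (marg m).
by rewrite /reweight big_bool /= t1 t0 /pert mik ldl_weight_true /ldl_d /=; ring.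
Qed.

Lemma pert_state_density : is_density pert_state.
Proof.
have tr1 : \tr pert_state = 1.
  rewrite mxtraceD !mxtrace_prodmx big1 => [|m _]; last exact: trace_twist1.
  by rewrite (bigD1 i) //= trace_twist_pert ?eqxx // mul0r addr0.
rewrite /pert_state /prod_state !reweight_gram ldl_gramD in tr1 *; apply: gram_density tr1 => z.
rewrite !big_split /= big1_eq mul1r prod_pert -{1}(mul1r (\prod_m _)) -mulrDl mulr_ge0 ?pert_weight_ge0 // prodr_ge0 // => m _.
by apply: ldl_d_ge0; [exact: marg_herm | exact: marg_psd].
Qed.

Lemma pert_state_marginal m : same_marginal [set m] pert_state rho.
Proof.
move=> x y; rewrite ptraceD prod_state_marginal ptrace1_prodmx.
pose m' := if m == i then k else i.
have m'_neq : m' != m.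
  by rewrite /m'; case: (m =P i) => [->|/eqP mi]; rewrite ?eqxx ?(negbTE mi) eq_sym.
have m'_ik : (m' == i) || (m' == k) by rewrite /m'; case: (m == i); rewrite eqxx ?orbT.
by rewrite (bigD1 m') //= trace_twist_pert // mul0r mulr0 addr0.
Qed.

Lemma pert_state_neq : \rank (marginal1 i rho) != 1%N -> \rank (marginal1 k rho) != 1%N ->
  pert_state != prod_state.
Proof.
move=> mixed_i mixed_k; rewrite /pert_state -subr_eq0 addrC addKr.
pose xs : B := [ffun m => ~~ ((m == i) || (m == k)) && (marg m false false == 0)].
apply/eqP => /matrixP /(_ (enum_rank xs) (enum_rank xs)) /eqP; rewrite !mxE !enum_rankK.
apply/negP/prodf_neq0 => m _; rewrite ffunE.
have [mik|mik] := boolP ((m == i) || (m == k)).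
  have [g0 d0] : marg m false false != 0 /\ ldl_d (marg m) true != 0.
    by apply: marg_nondegenerate; case/orP: mik => /eqP ->.
  by rewrite /= reweight_pert00 // mulf_neq0.
rewrite /= reweight_pert_other //; have [m0|//] := eqVneq (marg m false false) 0.
by have := marg_trace m; rewrite m0 addr0 => ->; rewrite oner_eq0.
Qed.

End Perturbation.

End MixedMarginals.

Lemma Lval_ge2 (R : realType) n (rho : 'M[complex R]_(qdim n)) (i k : 'I_n) : is_density rho -> i != k ->
  \rank (marginal1 i rho) != 1%N -> \rank (marginal1 k rho) != 1%N -> (2 <= Lval rho)%N.
Proof.
move=> rho_density ik mixed_i mixed_k.
apply: leq_Lval => [|SS det_SS]; first by have := max_card [set i; k]; rewrite cards2 ik card_ord.
rewrite ltnNge; apply/negP => /bigmax_leqP small.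
have agree sigma : is_density sigma -> (forall m, same_marginal [set m] sigma rho) -> sigma = rho.
  move=> sigma_density same1; apply: det_SS => // S /small.
  exact: same_marginal_small.
move: (pert_state_neq rho_density mixed_i mixed_k).
rewrite (agree _ (prod_state_density rho_density) (prod_state_marginal rho_density)).
by rewrite (agree _ (pert_state_density rho_density ik) (pert_state_marginal rho_density ik)) eqxx.
Qed.

Lemma two_failures (T : finType) (P : pred T) (t0 : T) :
  ~~ [exists j, [forall i, (i != j) ==> P i]] ->
  exists i k, [/\ i != k, ~~ P i & ~~ P k].
Proof.
move=> /existsPn no_center.
case/forallPn: (no_center t0) => i; rewrite negb_imply => /andP[_ Pi].
case/forallPn: (no_center i) => k; rewrite negb_imply => /andP[ki Pk].
by exists i, k; rewrite eq_sym ki.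
Qed.

Unset Implicit Arguments.

Theorem mainTheorem10 (R : realType) (n : nat) (rho : 'M[complex R]_(qdim n)) :
  (2 <= n)%N -> is_density rho ->
  (Lval rho = 1%N <->
   exists j : 'I_n, forall i : 'I_n, i != j -> \rank (marginal1 i rho) = 1%N).
Proof.
move=> n_ge2 rho_density; have n_gt0 : (0 < n)%N by apply: ltnW.
split=> [L1 | [j pure]].
  case: (boolP [exists j, [forall i, (i != j) ==> (\rank (marginal1 i rho) == 1%N)]]).
    move=> /existsP[j /forallP pure].
    by exists j => i ij; apply/eqP; exact: (implyP (pure i)).
  case/(two_failures (Ordinal n_gt0)) => i [k [ik mixed_i mixed_k]].
  by have := Lval_ge2 rho_density ik mixed_i mixed_k; rewrite L1.
apply/eqP; rewrite eqn_leq Lval_ge1 // andbT.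
apply: Lval_leq (singletons_determine rho_density pure) _.
by apply/bigmax_leqP => S /imsetP[i _ ->]; rewrite cards1.
Qed.
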